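(* Let $k\ge 4$ and let $w$ be a minimal uncompletable word for $S_k$. Let $p$ be an occurrence of $v=b^{k-1}a$ and $q$ an occurrence of $u=ba^{k-1}$ in $w$ that are consecutive ($p$ before $q$), with sets of forbidden local positions $F_p$ and $F_q$. If $F_q=\{0,i,i+1,\dots,k-1\}$ for some $1\le i\le k-1$ and $|F_p|=|F_q|$, then the occurrences $p$ and $q$ overlap and $F_p=\{0,i-1,i,\dots,k-2\}$.
   Context: $\Sigma=\{a,b\}$. $S_k=\left(\Sigma^k\setminus\{ba^{k-1},b^{k-1}a\}\right)\cup\left(\Sigma^{k-1}\setminus\{a^{k-1},b^{k-1}\}\right)$, $u=ba^{k-1}$, $v=b^{k-1}a$. $\mathit{Fact}(S^* )$ and $\mathit{Pref}(S^* )$ are the sets of factors and of prefixes of words in $S^*$. A word $w\notin\mathit{Fact}(S_k^* )$ is uncompletable; a minimal uncompletable word is one of minimal length. For $w=w_1\cdots w_n$, $w[i..j]=w_i\cdots w_j$ (empty if $i>j$). A position $j$, $0\le j\le n-1$, is forbidden in $w$ if $w[j+1..n]\notin\mathit{Pref}(S_k^* )$. An occurrence of $p\in\{u,v\}$ in $w$ is an index $s$ with $w[s+1..s+k]=p$; local position $i\in\{0,\dots,k-1\}$ is the position $s+i$ of $w$, and it is forbidden in the occurrence if $s+i$ is forbidden in $w$. Two occurrences of words from $\{u,v\}$ starting at $s<t$ overlap if $t<s+k$; they are consecutive if either they overlap or they are the only occurrences of $u$ or $v$ lying inside the factor $w[s+1..t+k]$. *)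

From mathcomp Require Import all_boot.
Set Implicit Arguments. Unset Strict Implicit. Unset Printing Implicit Defensive.

Definition la : bool := false.
Definition lb : bool := true.
Definition word := seq bool.

Definition uw (k : nat) : word := lb :: nseq k.-1 la.
Definition vw (k : nat) : word := rcons (nseq k.-1 lb) la.

Definition inS (k : nat) (x : word) : bool :=
  ((size x == k) && (x != uw k) && (x != vw k))
  || ((size x == k.-1) && (x != nseq k.-1 la) && (x != nseq k.-1 lb)).

Definition inStar (k : nat) (x : word) : Prop :=
  exists l : seq word, all (inS k) l /\ flatten l = x.

Definition inFact (k : nat) (w : word) : Prop :=
  exists x y : word, inStar k (x ++ w ++ y).

Definition inPref (k : nat) (w : word) : Prop :=
  exists y : word, inStar k (w ++ y).

Definition uncompletable (k : nat) (w : word) : Prop := ~ inFact k w.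

Definition min_uncompletable (k : nat) (w : word) : Prop :=
  uncompletable k w /\ forall w' : word, uncompletable k w' -> size w <= size w'.

(* position j (0 <= j <= n-1) is forbidden in w if w[j+1..n] notin Pref(S^* ) *)
Definition forbidden (k : nat) (w : word) (j : nat) : Prop :=
  j < size w /\ ~ inPref k (drop j w).

(* occurrence of p at index s: w[s+1..s+|p|] = p *)
Definition occ (w p : word) (s : nat) : Prop :=
  s + size p <= size w /\ take (size p) (drop s w) = p.

Definition occ_uv (k : nat) (w : word) (r : nat) : Prop :=
  occ w (uw k) r \/ occ w (vw k) r.

Definition overlap (k s t : nat) : Prop := s < t /\ t < s + k.

Definition consecutive (k : nat) (w : word) (s t : nat) : Prop :=
  s < t /\
  (overlap k s t \/
   forall r, s <= r -> r + k <= t + k -> occ_uv k w r -> r = s \/ r = t).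

(* Write P j when the suffix of w starting at (0-based) position j lies in
   Pref(S^* ), i.e. when j is not forbidden; a forbidden set then has size
   k minus the number of P-positions in its window.  Two local rules govern P:
   if the factor of length k or k-1 starting at j is in S, then P at its end
   gives P j; conversely P j gives P (j + k) or P (j + k - 1).  The shape of
   F_q says that P (t + x) holds exactly for 0 < x < i, and i >= 2 because
   k consecutive forbidden positions from t > 0 on would leave a shorter
   uncompletable suffix of w.  P s fails because v and b^(k-1), the only
   candidates for a first factor, are not in S.

   If the occurrences overlap, the letters force t = s + k - 2 and the two
   rules determine P along p position by position.  Otherwise every length-k
   factor strictly between them is in S, so the window count
   c j = #{m < k | P (j + m)} cannot increase on (s, t].  The length-(k-1)
   factors starting inside v are in S, which gives
   c (s + k) <= P (s + k) + c s, with equality only if P never switches off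
   inside the window at s + k.  Since |F_p| = |F_q| means c s = c t, both
   the case t < s + 2k - i (where P (s + k) fails while P switches off at
   t + i) and the remaining case (where P holds at t - (k - i) but not at
   t + i, so c drops strictly) are impossible. *)

From Stdlib Require Import Lia ClassicalEpsilon.
From mathcomp Require Import all_boot zify.
Set Implicit Arguments. Unset Strict Implicit. Unset Printing Implicit Defensive.

Lemma eq_cat_size_le (T : Type) (x y u v : seq T) :
  x ++ y = u ++ v -> size x <= size u -> x = take (size x) u /\ y = drop (size x) u ++ v.
Proof.
elim: x u => [|c x IH] [|d u] //= [-> xy_uv]; rewrite ?take0 ?drop0 // ltnS => le_xu.
by case: (IH _ xy_uv le_xu) => <- <-.
Qed.

Lemma inS_size k x : inS k x -> size x = k \/ size x = k.-1.
Proof. by case/orP => /andP [/andP [/eqP -> _] _]; [left | right]. Qed.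

Lemma inS_size_le k x : inS k x -> size x <= k.
Proof. by case/inS_size => ->; rewrite ?leq_pred. Qed.

Lemma inPref_cat k x y : inS k x -> inPref k y -> inPref k (x ++ y).
Proof. by move=> Sx [z [l [Sl el]]]; exists z, (x :: l); rewrite /= Sx Sl el catA. Qed.

Lemma inPref_inv k x : 0 < k -> k <= size x -> inPref k x ->
  exists L, [/\ L = k \/ L = k.-1, inS k (take L x) & inPref k (drop L x)].
Proof.
move=> k_gt0 kx [z [l [Sl el]]]; case: l Sl el => [|e l] /=.
  by move=> _ /(congr1 size); rewrite size_cat /=; lia.
move=> /andP [Se Sl] el.
have [take_x drop_x] := eq_cat_size_le el (leq_trans (inS_size_le Se) kx).
exists (size e); split; [exact: inS_size | by rewrite -take_x |].
by exists z, l; rewrite drop_x.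
Qed.

Lemma inFact_window k x : 0 < k -> k <= size x -> inFact k x ->
  exists2 j, j < k & inPref k (drop j x).
Proof.
move=> k_gt0 kx [y [z [l [Sl el]]]]; elim: l y Sl el => [|e l IH] y /=.
  by move=> _ /(congr1 size); rewrite !size_cat /=; lia.
move=> /andP [Se Sl] el; case: y el => [|c y] el.
  by exists 0 => //; exists z, (e :: l); rewrite /= Se Sl drop0.
have [le_ey | lt_ye] := leqP (size e) (size (c :: y)).
  by have [_ l_drop] := eq_cat_size_le el le_ey; apply: IH Sl l_drop.
have [_ e_drop] := eq_cat_size_le (esym el) (ltnW lt_ye).
set d := drop (size (c :: y)) e in e_drop.
have size_d : size d = size e - (size y).+1 by rewrite size_drop.
have le_e := inS_size_le Se.
have le_dx : size d <= size x by lia.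
have [_ l_drop] := eq_cat_size_le (esym e_drop) le_dx.
exists (size d); first lia.
by exists z, l; rewrite Sl -l_drop.
Qed.

Lemma count_iota_shift (P : pred nat) j n :
  count P (iota j n) + P (j + n) = P j + count P (iota j.+1 n).
Proof.
have -> : P j + count P (iota j.+1 n) = count P (iota j n.+1) by [].
by rewrite -addn1 iotaD count_cat /= addn0.
Qed.

Section CountSub.
Variables (T : eqType) (a b : pred T).

Lemma count_sub_in s : {in s, subpred a b} -> count a s <= count b s.
Proof.
elim: s => //= x s IH ab.
have ab_s : {in s, subpred a b} by move=> y ys; apply: ab; rewrite in_cons ys orbT.
apply: leq_add (IH ab_s).
by case ax: (a x); rewrite // (ab x (mem_head x s) ax).
Qed.

Lemma count_sub_in_eq s : {in s, subpred a b} -> count a s = count b s -> {in s, subpred b a}.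
Proof.
elim: s => // x s IH ab /= eq_ab.
have ab_s : {in s, subpred a b} by move=> y ys; apply: ab; rewrite in_cons ys orbT.
have le_x : a x <= b x by case ax: (a x); rewrite // (ab x (mem_head x s) ax).
have le_s := count_sub_in ab_s.
move=> y; rewrite in_cons => /orP [/eqP -> | ys]; last by apply: IH => //; lia.
by move: le_x eq_ab; case: (a x); case: (b x) => //=; lia.
Qed.

End CountSub.

Lemma count_iota_between n i :
  count (fun x => (x != 0) && (x < i)) (iota 0 n) = (minn n i).-1.
Proof.
elim: n => [|n IH]; first by rewrite min0n.
rewrite -addn1 iotaD count_cat IH /= ?addn0.
by case: eqP; case: ltnP => /=; lia.
Qed.

Lemma card_ord_pred k (f : nat -> bool) : #|[pred j : 'I_k | f j]| = count f (iota 0 k).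
Proof. by rewrite cardE /enum_mem size_filter -enumT -val_enum_ord count_map. Qed.

Definition prefb (k : nat) (w : word) (j : nat) : bool :=
  if excluded_middle_informative (inPref k (drop j w)) then true else false.
Arguments prefb : simpl never.

Lemma prefbP k w j : reflect (inPref k (drop j w)) (prefb k w j).
Proof. by rewrite /prefb; case: excluded_middle_informative => H; constructor. Qed.

Section Prefixes.
Variables (k : nat) (w : word).
Local Notation P := (prefb k w).

Lemma prefb_cat j L : inS k (take L (drop j w)) -> P (j + L) -> P j.
Proof.
move=> S_jL /prefbP pref_jL; apply/prefbP.
by rewrite -(cat_take_drop L (drop j w)) drop_drop addnC; apply: inPref_cat.
Qed.

Lemma prefb_inv j : 0 < k -> j + k <= size w -> P j ->
  exists L, [/\ L = k \/ L = k.-1, inS k (take L (drop j w)) & P (j + L)].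
Proof.
move=> k_gt0 jk /prefbP pref_j.
have [|L [kL S_L pref_L]] := inPref_inv k_gt0 _ pref_j; first by rewrite size_drop; lia.
by exists L; split => //; apply/prefbP; rewrite addnC -drop_drop.
Qed.

Lemma prefb_next j : 0 < k -> j + k <= size w -> P j -> P (j + k) || P (j + k.-1).
Proof. by move=> k_gt0 jk /(prefb_inv k_gt0 jk) [L [[] -> _ ->]]; rewrite ?orbT. Qed.

Lemma mem_forbidden_set r (F : {set 'I_k}) :
  (forall j : 'I_k, j \in F <-> forbidden k w (r + j)) -> r + k <= size w ->
  forall j : 'I_k, (j \in F) = ~~ P (r + j).
Proof.
move=> memF rk j; have := memF j; rewrite /forbidden.
case: (j \in F); case: prefbP => pref [F_forb forb_F] //=.
- by case: (F_forb isT).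
- by apply: forb_F; split=> //; have := ltn_ord j; lia.
Qed.

Lemma card_forbidden_set r (F : {set 'I_k}) :
  (forall j : 'I_k, j \in F <-> forbidden k w (r + j)) -> r + k <= size w ->
  #|F| + count P (iota r k) = k.
Proof.
move=> memF rk; rewrite -[RHS]card_ord -(cardC F); congr addn.
have ->: iota r k = map (addn r) (iota 0 k) by rewrite -iotaDl addn0.
rewrite count_map -card_ord_pred; apply: eq_card => j.
by rewrite !inE (mem_forbidden_set memF rk) negbK.
Qed.

Lemma min_uncompletable_window r : 0 < k -> min_uncompletable k w ->
  0 < r -> r + k <= size w -> 0 < count P (iota r k).
Proof.
move=> k_gt0 [_ minw] r_gt0 rk; rewrite -has_count; apply/negPn/negP => no_pref.
suff /minw : uncompletable k (drop r w) by rewrite size_drop; lia.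
move=> /(inFact_window k_gt0) [|j jk pref]; first by rewrite size_drop; lia.
apply: (negP no_pref); apply/hasP; exists (r + j); first by rewrite mem_iota; lia.
by apply/prefbP; rewrite addnC -drop_drop.
Qed.

End Prefixes.

Section Letters.
Variable k : nat.
Hypothesis k_gt0 : 0 < k.

Lemma size_uw : size (uw k) = k.
Proof. by rewrite /= size_nseq prednK. Qed.

Lemma size_vw : size (vw k) = k.
Proof. by rewrite size_rcons size_nseq prednK. Qed.

Lemma nth_uw m : nth false (uw k) m = (m == 0) && (m < k).
Proof. by case: m => [|m] /=; rewrite ?k_gt0 // nth_nseq if_same. Qed.

Lemma nth_vw m : nth false (vw k) m = (m < k.-1).
Proof.
by rewrite nth_rcons size_nseq nth_nseq; case: ltngtP.
Qed.

Lemma take_vw : take k.-1 (vw k) = nseq k.-1 lb.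
Proof. by rewrite /vw -cats1 take_size_cat ?size_nseq. Qed.

Lemma vw_notin_S : ~~ inS k (vw k).
Proof.
rewrite /inS size_vw (eqxx (vw k)) andbF /=.
by apply/negP => /andP [/andP [/eqP ? _] _]; lia.
Qed.

Lemma nseq_lb_notin_S : ~~ inS k (nseq k.-1 lb).
Proof.
rewrite /inS size_nseq (eqxx (nseq _ lb)) andbF orbF.
by apply/negP => /andP [/andP [/eqP ? _] _]; lia.
Qed.

Lemma inS_of_size_k x : size x = k -> x != uw k -> x != vw k -> inS k x.
Proof. by move=> size_x ne_u ne_v; rewrite /inS size_x eqxx ne_u ne_v. Qed.

Lemma inS_of_size_pred x :
  size x = k.-1 -> x != nseq k.-1 la -> x != nseq k.-1 lb -> inS k x.
Proof. by move=> size_x ne_a ne_b; rewrite /inS size_x eqxx ne_a ne_b orbT. Qed.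

End Letters.

Lemma occ_nth w p r : occ w p r -> forall m, m < size p -> nth false w (r + m) = nth false p m.
Proof. by case=> _ take_p m m_p; rewrite -take_p nth_take // nth_drop. Qed.

Lemma neq_nseq (x : word) n c m : m < n -> nth false x m != c -> x != nseq n c.
Proof. by move=> m_n; apply: contra => /eqP ->; rewrite nth_nseq m_n. Qed.

Lemma occ_uw_of w r k : 0 < k -> r + k <= size w -> nth false w r ->
  take k.-1 (drop r.+1 w) = nseq k.-1 la -> occ w (uw k) r.
Proof.
move=> k_gt0 rk w_r take_a; split; first by rewrite size_uw.
rewrite size_uw //; case: k k_gt0 rk take_a => // k _ rk take_a.
by rewrite (drop_nth false) /= ?take_a ?w_r //; lia.
Qed.

Lemma occ_vw_of w r k : 0 < k -> r + k <= size w ->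
  take k.-1 (drop r w) = nseq k.-1 lb -> ~~ nth false w (r + k.-1) -> occ w (vw k) r.
Proof.
move=> k_gt0 rk take_b w_last; split; first by rewrite size_vw.
rewrite size_vw //; case: k k_gt0 rk take_b w_last => // k _ rk take_b w_last.
by rewrite (take_nth false) ?take_b ?nth_drop ?(negbTE w_last) // size_drop; lia.
Qed.

Lemma size_take_drop (x : word) j L : j + L <= size x -> size (take L (drop j x)) = L.
Proof. by move=> jL; rewrite size_takel // size_drop; lia. Qed.

Lemma nth_take_drop (x : word) j L m :
  m < L -> nth false (take L (drop j x)) m = nth false x (j + m).
Proof. by move=> mL; rewrite nth_take // nth_drop. Qed.

Section ConsecutiveVU.
Variables (k : nat) (w : word) (s t i : nat).
Hypotheses (k_ge4 : 4 <= k) (occ_v : occ w (vw k) s) (occ_u : occ w (uw k) t).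
Hypotheses (lt_st : s < t) (i_range : 1 <= i <= k.-1) (wmin : min_uncompletable k w).
Hypothesis prefb_u : forall x, x < k -> prefb k w (t + x) = (x != 0) && (x < i).
Local Notation P := (prefb k w).

Let k_gt0 : 0 < k. Proof. lia. Qed.

Lemma v_window : s + k <= size w.
Proof. by case: occ_v; rewrite size_vw. Qed.

Lemma u_window : t + k <= size w.
Proof. by case: occ_u; rewrite size_uw. Qed.

Lemma nth_w_v m : m < k -> nth false w (s + m) = (m < k.-1).
Proof. by move=> mk; rewrite (occ_nth occ_v) ?size_vw // nth_vw. Qed.

Lemma nth_w_u m : m < k -> nth false w (t + m) = (m == 0).
Proof. by move=> mk; rewrite (occ_nth occ_u) ?size_uw // nth_uw // mk andbT. Qed.

Lemma count_window_u : count P (iota t k) = i.-1.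
Proof.
rewrite -[t]addn0 iotaDl count_map.
rewrite (eq_in_count (a2 := fun x => (x != 0) && (x < i))) ?count_iota_between; first by lia.
by move=> x; rewrite mem_iota => /andP [_ xk]; apply: prefb_u.
Qed.

Lemma two_le_i : 2 <= i.
Proof.
have := min_uncompletable_window k_gt0 wmin _ u_window.
by rewrite count_window_u; lia.
Qed.

Lemma prefb_v_start : P s = false.
Proof.
apply/negbTE/negP => /(prefb_inv k_gt0 v_window) [L [[] -> S_L _]].
  move: S_L; case: occ_v => _; rewrite size_vw // => ->.
  by rewrite (negbTE (vw_notin_S k_gt0)).
move: S_L; rewrite -(take_takel _ (leq_pred k)); case: occ_v => _; rewrite size_vw // => ->.
by rewrite take_vw (negbTE (nseq_lb_notin_S k_gt0)).
Qed.

Lemma inS_inside_v m : 0 < m <= k - 2 -> s + m + k.-1 <= size w ->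
  inS k (take k.-1 (drop (s + m) w)).
Proof.
move=> m_range fits; apply: inS_of_size_pred; first exact: size_take_drop.
- apply: (@neq_nseq _ _ _ 0); first lia.
  rewrite nth_take_drop ?addn0 ?nth_w_v; try lia.
  by have -> : m < k.-1 by lia.
- apply: (@neq_nseq _ _ _ (k.-1 - m)); first lia.
  rewrite nth_take_drop; last lia.
  rewrite -addnA subnKC ?nth_w_v ?ltnn //; lia.
Qed.

Lemma overlap_at_v_end : t < s + k -> t = s + (k - 2).
Proof.
move=> ov.
have b_t : nth false w t by rewrite -[t]addn0 nth_w_u.
have a_t1 : ~~ nth false w t.+1 by rewrite -addn1 nth_w_u //; lia.
have lt_ts : t - s < k.-1.
  by move: b_t; rewrite -{1}(subnKC (ltnW lt_st)) nth_w_v //; lia.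
have := @nth_w_v (t - s).+1; rewrite addnS subnKC; last exact: ltnW.
by rewrite (negbTE a_t1) => /(_ ltac:(lia)); lia.
Qed.

Lemma prefb_v_overlap : t < s + k -> forall m, m < k ->
  P (s + m) = ~~ ((m == 0) || (i.-1 <= m <= k - 2)).
Proof.
move=> /overlap_at_v_end t_eq m mk; have := two_le_i.
have inner : 0 < m < k - 2 -> P (s + m) = (m.+1 < i).
  move=> m_range; apply/idP/idP.
  - move=> P_m; have fits : s + m + k <= size w by have := u_window; lia.
    move: (prefb_next k_gt0 fits P_m).
    have -> : s + m + k = t + m.+2 by lia.
    have -> : s + m + k.-1 = t + m.+1 by lia.
    by rewrite !prefb_u; [case/orP => /andP [_]; lia | lia | lia].
  - move=> lt_mi; apply: (@prefb_cat _ _ _ k.-1).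
      by apply: inS_inside_v; have := u_window; lia.
    have -> : s + m + k.-1 = t + m.+1 by lia.
    by rewrite prefb_u; [apply/andP; split | lia].
have [->|m_ne0] := eqVneq m 0; first by rewrite addn0 prefb_v_start.
have [m_eq | m_ne] := eqVneq m (k - 2).
  by rewrite m_eq -t_eq -[t]addn0 prefb_u //; lia.
have [m_eq' | m_ne'] := eqVneq m k.-1.
  have -> : s + m = t + 1 by lia.
  by rewrite prefb_u; lia.
by rewrite inner; lia.
Qed.

Section Separated.
Hypothesis le_skt : s + k <= t.
Hypothesis no_occ_between : forall r, s < r -> r < t -> ~ occ_uv k w r.
Hypothesis count_eq : count P (iota s k) = count P (iota t k).

Lemma inS_between r : s < r -> r < t -> inS k (take k (drop r w)).
Proof.
move=> sr rt; have fits : r + k <= size w by have := u_window; lia.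
apply: inS_of_size_k; first exact: size_take_drop.
- by apply/eqP => take_u; apply: (no_occ_between sr rt); left; split; rewrite size_uw.
- by apply/eqP => take_v; apply: (no_occ_between sr rt); right; split; rewrite size_vw.
Qed.

Lemma inS_after_v m : 0 < m < k -> inS k (take k.-1 (drop (s + m) w)).
Proof.
move=> m_range; have fits : s + m + k.-1 <= size w by have := u_window; lia.
have [m_small | m_last] := leqP m (k - 2); first by apply: inS_inside_v => //; lia.
apply: inS_of_size_pred; first exact: size_take_drop.
- apply/eqP => all_a; apply: (@no_occ_between (s + (k - 2))); [lia | lia | left].
  apply: occ_uw_of => //; first by have := u_window; lia.
    by rewrite nth_w_v; lia.
  by have -> : (s + (k - 2)).+1 = s + m by lia.
- apply: (@neq_nseq _ _ _ 0); first lia.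
  rewrite nth_take_drop ?addn0 ?nth_w_v; try lia.
  by have -> : m < k.-1 = false by lia.
Qed.

Lemma prefb_between j : s < j -> j < t -> P (j + k) -> P j.
Proof. by move=> sj jt; apply: prefb_cat; apply: inS_between. Qed.

Lemma prefb_after_v x : s < x -> x < s + k -> P (x + k.-1) -> P x.
Proof.
move=> sx xsk; apply: prefb_cat; rewrite -(subnKC (ltnW sx)).
by apply: inS_after_v; lia.
Qed.

Lemma count_window_step j : s < j -> j < t -> count P (iota j.+1 k) <= count P (iota j k).
Proof.
move=> sj jt; have := count_iota_shift P j k.
by case: (P (j + k)) (@prefb_between j sj jt) => [/(_ isT) -> | _] /=; lia.
Qed.

Lemma count_window_nonincr a b : s < a -> a <= b -> b <= t ->
  count P (iota b k) <= count P (iota a k).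
Proof.
move=> sa ab bt.
apply: (@homo_leq_in _ [pred x | s < x <= t] (fun j => count P (iota j k))
  (fun x y => y <= x)).
- exact: leqnn.
- by move=> y x z yx zy; apply: leq_trans zy yx.
- by move=> x y; rewrite !inE => x_range y_range z; rewrite inE; lia.
- by move=> j; rewrite !inE => j_range j1_range; apply: count_window_step; lia.
- by rewrite inE; lia.
- by rewrite inE; lia.
- exact: ab.
Qed.

Let iota_window j : iota j k = j :: iota j.+1 k.-1.
Proof. by rewrite -{1}(prednK k_gt0). Qed.

Lemma count_window_v : count P (iota s k) = count P (iota s.+1 k.-1).
Proof. by rewrite iota_window /= prefb_v_start. Qed.

Lemma count_window_v_next :
  count P (iota (s + k) k) = P (s + k) + count (P \o addn k) (iota s.+1 k.-1).
Proof. by rewrite iota_window /= -count_map -iotaDl addnS [k + s]addnC. Qed.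

Lemma prefb_shift_sub : {in iota s.+1 k.-1, subpred (P \o addn k) P}.
Proof.
move=> x; rewrite mem_iota => x_range /= P_x.
by apply: prefb_between; [lia | lia | rewrite addnC].
Qed.

Lemma count_window_after_v : count P (iota (s + k) k) <= P (s + k) + count P (iota s k).
Proof.
by rewrite count_window_v_next count_window_v leq_add2l; apply: count_sub_in prefb_shift_sub.
Qed.

Lemma prefb_no_drop : count P (iota (s + k) k) = P (s + k) + count P (iota s k) ->
  forall y, s + k <= y -> y < s + k + k.-1 -> P y -> P y.+1.
Proof.
rewrite count_window_v_next count_window_v => /addnI eq_count y le_y lt_y P_y.
have x_in : y.+1 - k \in iota s.+1 k.-1 by rewrite mem_iota; lia.
have /= := count_sub_in_eq prefb_shift_sub eq_count x_in.
rewrite subnKC; last lia.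
apply; apply: prefb_after_v; [lia | lia |].
by have -> : y.+1 - k + k.-1 = y by lia.
Qed.

Lemma count_window_full :
  count P (iota (s + k) k) = P (s + k) + count P (iota s k) -> P (s + k) ->
  count P (iota (s + k) k) = k.
Proof.
move=> eq_count P_sk.
have all_P m : m < k -> P (s + k + m).
  elim: m => [|m IH] lt_mk; first by rewrite addn0.
  by rewrite addnS; apply: (prefb_no_drop eq_count); [lia | lia | apply: IH; lia].
rewrite -[in RHS](size_iota (s + k) k) -count_predT; apply: eq_in_count => y.
rewrite mem_iota => y_range /=; rewrite (_ : y = s + k + (y - (s + k))); last lia.
by apply: all_P; lia.
Qed.

Lemma prefb_after_v_near : t < s + k + (k - i) -> P (s + k) = false.
Proof.
move=> near; move: le_skt; rewrite leq_eqVlt => /orP [/eqP -> | lt_skt].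
  by rewrite -[t]addn0 prefb_u.
apply/negbTE/negP => P_sk.
have fits : s + k + k <= size w by have := u_window; lia.
move: (prefb_next k_gt0 fits P_sk).
have -> : s + k + k = t + (s + k + k - t) by lia.
have -> : s + k + k.-1 = t + (s + k + k.-1 - t) by lia.
by rewrite !prefb_u; lia.
Qed.

Lemma not_near : t < s + k + (k - i) -> False.
Proof.
move=> near; have P_sk := prefb_after_v_near near.
have eq_count : count P (iota (s + k) k) = P (s + k) + count P (iota s k).
  have := count_window_after_v; have := @count_window_nonincr (s + k) t.
  by rewrite P_sk count_eq; lia.
have := prefb_no_drop eq_count (y := t + i.-1); have := two_le_i.
by rewrite -addnS prednK ?prefb_u; lia.
Qed.

Lemma prefb_before_u_far : s + k + (k - i) <= t -> P (t - (k - i)).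
Proof.
move=> far; set j0 := t - (k - i); have := two_le_i => i_ge2.
have fits : j0 + k.-1 <= size w by have := u_window; lia.
apply: (@prefb_cat _ _ _ k.-1); last first.
  have -> : j0 + k.-1 = t + i.-1 by lia.
  by rewrite prefb_u; lia.
apply: inS_of_size_pred; first exact: size_take_drop.
- apply: (@neq_nseq _ _ _ (k - i)); first lia.
  rewrite nth_take_drop; last lia.
  have -> : j0 + (k - i) = t + 0 by lia.
  by rewrite nth_w_u.
- apply/eqP => all_b; apply: (@no_occ_between j0); [lia | lia | right].
  apply: occ_vw_of => //; first by have := u_window; lia.
  have -> : j0 + k.-1 = t + i.-1 by lia.
  by rewrite nth_w_u; lia.
Qed.

Lemma not_far : s + k + (k - i) <= t -> False.
Proof.
move=> far; set j0 := t - (k - i).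
have P_j0k : P (j0 + k) = false.
  have -> : j0 + k = t + i by lia.
  by rewrite prefb_u; lia.
have := count_iota_shift P j0 k; rewrite prefb_before_u_far // P_j0k => shift.
have le_t := @count_window_nonincr j0.+1 t.
have le_j0 := @count_window_nonincr (s + k) j0.
have after := count_window_after_v.
have P_sk : P (s + k) by move: after; case: (P (s + k)) => //=; lia.
have eq_count : count P (iota (s + k) k) = P (s + k) + count P (iota s k).
  by move: after; rewrite P_sk; lia.
have := count_window_full eq_count P_sk; have := count_window_u.
by rewrite P_sk in eq_count; lia.
Qed.

Lemma separated_absurd : False.
Proof. by case: (ltnP t (s + k + (k - i))); [apply: not_near | apply: not_far]. Qed.

End Separated.

End ConsecutiveVU.

Theorem lemma6 (k : nat) (w : word) (s t i : nat) (Fp Fq : {set 'I_k}) :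
  4 <= k ->
  min_uncompletable k w ->
  occ w (vw k) s ->
  occ w (uw k) t ->
  consecutive k w s t ->
  (forall j : 'I_k, j \in Fp <-> forbidden k w (s + j)) ->
  (forall j : 'I_k, j \in Fq <-> forbidden k w (t + j)) ->
  1 <= i <= k.-1 ->
  Fq = [set j : 'I_k | (val j == 0) || (i <= val j)] ->
  #|Fp| = #|Fq| ->
  overlap k s t /\
  Fp = [set j : 'I_k | (val j == 0) || (i.-1 <= val j <= k - 2)].
Proof.
move=> k_ge4 wmin occ_v occ_u [lt_st consec] memFp memFq i_range defFq card_eq.
have k_gt0 : 0 < k by lia.
have v_fits : s + k <= size w by case: occ_v; rewrite size_vw.
have u_fits : t + k <= size w by case: occ_u; rewrite size_uw.
have prefb_u x : x < k -> prefb k w (t + x) = (x != 0) && (x < i).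
  move=> xk; have := mem_forbidden_set memFq u_fits (Ordinal xk).
  by rewrite defFq inE /= => /(congr1 negb); rewrite negbK => <-; lia.
have [ov | le_skt] := ltnP t (s + k).
  split; first by split.
  apply/setP => j; rewrite inE (mem_forbidden_set memFp v_fits).
  have prefb_v := prefb_v_overlap k_ge4 occ_v occ_u lt_st i_range wmin prefb_u ov.
  by rewrite prefb_v ?negbK.
exfalso; have no_occ r : s < r -> r < t -> ~ occ_uv k w r.
  move=> sr rt occ_r; case: consec => [[_ ?] | only]; first lia.
  by case: (only r _ _ occ_r); lia.
have count_eq : count (prefb k w) (iota s k) = count (prefb k w) (iota t k).
  by have := card_forbidden_set memFp v_fits; have := card_forbidden_set memFq u_fits; lia.
exact: (separated_absurd k_ge4 occ_v occ_u lt_st i_range wmin prefb_u le_skt no_occ count_eq).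
Qed.
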